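(* Let $X_1, X_2, \dots$ be i.i.d. random variables with $\mathbb{P}(X_1 = l) = p_l$ for $l \in \mathbb{Z}^+$. Fix integers $k \ge 1$ and $0 \le j \le k$, and let $n \ge k+1$. Then \[ \mathbb{P}(X_n \in R_j^k) = \sum_{i} \binom{k}{j} S_i^{j} (C_{i-1})^{k-j} p_i , \] and consequently, for every $i \in \mathbb{Z}^+$, \[ q_i := \mathbb{P}(X_n = i \mid X_n \in R_j^k) = \frac{\binom{k}{j} S_i^j (C_{i-1})^{k-j} p_i}{\sum_{l} \binom{k}{j} S_l^{j} (C_{l-1})^{k-j} p_l}. \]
   Context: For $i \in \mathbb{Z}^+$, $S_i = \mathbb{P}(X_1 \ge i) = \sum_{s \ge i} p_s$ and $C_i = \mathbb{P}(X_1 \le i) = \sum_{l=1}^{i} p_l$, with $C_0 = 0$ (so $S_i + C_{i-1} = 1$); sums over $i$ or $l$ range over $\mathbb{Z}^+$, and $0^0 = 1$. For $n \ge k+1$, $X_n$ is called a $j$-recent-$k$-record, written $X_n \in R_j^k$, if exactly $j$ of the $k$ values $X_{n-k}, X_{n-k+1}, \dots, X_{n-1}$ are at least as large as $X_n$, i.e. $|\{p : 1 \le p \le k,\ X_{n-p} \ge X_n\}| = j$. *)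

From HB Require Import structures.
From mathcomp Require Import all_boot all_order all_algebra.
From mathcomp Require Import all_classical all_reals all_analysis.
Set Implicit Arguments. Unset Strict Implicit. Unset Printing Implicit Defensive.
Import Order.TTheory GRing.Theory Num.Theory.
Local Open Scope classical_set_scope.
Local Open Scope ring_scope.

Definition Stail (R : realType) (p : nat -> R) (i : nat) : R :=
  fine (\sum_(i <= s <oo) (p s)%:E)%E.

Definition Ccum (R : realType) (p : nat -> R) (i : nat) : R :=
  \sum_(1 <= l < i.+1) p l.

(* The summand binom(k,j) S_i^j C_{i-1}^{k-j} p_i  (note 0^0 = 1 for ^+) *)
Definition rterm (R : realType) (p : nat -> R) (k j i : nat) : R :=
  'C(k, j)%:R * Stail p i ^+ j * Ccum p i.-1 ^+ (k - j) * p i.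

(* the event X_n \in R_j^k : exactly j of X_{n-1},...,X_{n-k} are >= X_n *)
Definition recent_record (T : Type) (X : nat -> T -> nat) (k j n : nat) : set T :=
  [set t | count (fun q => (X n t <= X (n - q)%N t)%N) (iota 1 k) = j].

Definition iid_pos_seq (R : realType) (d : measure_display) (T : measurableType d)
    (P : probability T R) (X : nat -> T -> nat) (p : nat -> R) : Prop :=
  [/\ (forall m (A : set nat), (0 < m)%N -> measurable (X m @^-1` A)),
      (forall m, (0 < m)%N -> P (X m @^-1` [set 0%N]) = 0%E),
      (forall m l, (0 < m)%N -> (0 < l)%N -> P (X m @^-1` [set l]) = (p l)%:E) &
      (forall (s : seq nat) (A : nat -> set nat), uniq s -> all (fun m => 0 < m)%N s ->
         P (\bigcap_(m in [set m | m \in s]) (X m @^-1` A m)) =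
         (\prod_(m <- s) P (X m @^-1` A m))%E)].

From HB Require Import structures.
From mathcomp Require Import all_boot all_order all_algebra.
From mathcomp Require Import all_classical all_reals all_analysis.
From mathcomp Require Import ring.
Set Implicit Arguments. Unset Strict Implicit. Unset Printing Implicit Defensive.
Import Order.TTheory GRing.Theory Num.Theory.
Local Open Scope classical_set_scope.

(** Split the event [X_n = i, X_n in R_j^k] according to the set B of lags
    l in {1, ..., k} with X_(n-l) >= i.  For fixed B it is an intersection
    of k + 1 independent events [X_n = i], [X_(n-l) >= i] (l in B) and
    [X_(n-l) < i] (l not in B), of probability
    p_i S_i^|B| C_(i-1)^(k-|B|); there are binom(k, j) sets with |B| = j.
    Summing over i by countable additivity gives P(R_j^k), since X_n = 0 is
    a null event, and the conditional law q_i is the ratio of the two. *)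

Lemma count_iota1 (f : nat -> bool) (k : nat) :
  count f (iota 1 k) = #|[set q : 'I_k | f q.+1]%SET|.
Proof.
rewrite -[1%N]addn0 iotaDl count_map -val_enum_ord count_map -sum1_count.
by rewrite -sum1_card big_enum_cond; apply: eq_bigl => q; rewrite inE.
Qed.

Section RecordPattern.
Variables (T : Type) (X : nat -> T -> nat) (k n i : nat).

Definition record_pattern (B : {set 'I_k}) : set T :=
  [set t | X n t = i /\ forall q : 'I_k, (i <= X (n - q.+1) t)%N = (q \in B)].

Lemma value_recent_record_bigcup j :
  X n @^-1` [set i] `&` recent_record X k j n =
  \bigcup_(B in [set B : {set 'I_k} | #|B| == j]) record_pattern B.
Proof.
apply/seteqP; split => t.
- rewrite /recent_record /= count_iota1 => -[Xi <-].
  exists [set q : 'I_k | (i <= X (n - q.+1) t)%N]%SET; first by rewrite /= Xi.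
  by split => // q; rewrite inE.
- move=> [B /= /eqP <- [Xi HB]]; split => //.
  by rewrite /recent_record /= count_iota1 Xi; apply: eq_card => q; rewrite inE HB.
Qed.

Lemma trivIset_record_pattern (D : set {set 'I_k}) : trivIset D record_pattern.
Proof.
move=> B B' _ _ [t [[_ HB] [_ HB']]].
by apply/setP => q; rewrite -HB -HB'.
Qed.

(* The constraint that [record_pattern B] puts on X_(n-l); lag q.+1 is the
   ordinal q : 'I_k. *)
Definition lag_event (B : {set 'I_k}) (l : nat) : set nat :=
  if l is l'.+1 then
    if l' \in [seq val q | q <- enum B] then [set x | i <= x]%N else [set x | x < i]%N
  else [set i].

Lemma lag_event_ord (B : {set 'I_k}) (q : 'I_k) :
  lag_event B q.+1 = if q \in B then [set x | i <= x]%N else [set x | x < i]%N.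
Proof. by rewrite /= (mem_map val_inj) mem_enum. Qed.

Definition lag_indices : seq nat := [seq n - l | l <- iota 0 k.+1].

Hypothesis lt_k_n : (k < n)%N.

Lemma lag_indices_gt0 m : m \in lag_indices -> (0 < m)%N.
Proof.
case/mapP => l; rewrite mem_iota ltnS => /andP[_ lk] ->.
by rewrite subn_gt0 (leq_ltn_trans lk).
Qed.

Lemma lag_indices_uniq : uniq lag_indices.
Proof.
rewrite map_inj_in_uniq ?iota_uniq // => l l'; rewrite !mem_iota /= !ltnS.
move=> lk l'k /(congr1 (subn n)).
by rewrite !subKn // ?(leq_trans _ (ltnW lt_k_n)).
Qed.

Lemma record_pattern_bigcap (B : {set 'I_k}) :
  record_pattern B =
  \bigcap_(m in [set m | m \in lag_indices]) X m @^-1` lag_event B (n - m).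
Proof.
have lag_ord (q : 'I_k) : n - q.+1 \in lag_indices.
  by apply/mapP; exists q.+1; rewrite // mem_iota /= ltnS.
apply/seteqP; split => t.
- move=> [Xi HB] m /= /mapP [[|l]]; rewrite mem_iota add0n ltnS => lk ->.
    by rewrite !subn0 subnn.
  rewrite subKn ?(leq_trans lk (ltnW lt_k_n)) // -[l]/(val (Ordinal lk)).
  by rewrite lag_event_ord -HB /=; case: leqP.
- move=> H; split.
    by have := H n; rewrite subnn; apply; apply/mapP; exists 0%N; rewrite ?subn0.
  move=> q; have := H _ (lag_ord q).
  rewrite /= subKn ?(leq_trans (ltn_ord q) (ltnW lt_k_n)) // lag_event_ord.
  by case: (q \in B) => /= [->|]; rewrite // ltnNge => /negbTE.
Qed.

End RecordPattern.

Local Open Scope ring_scope.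

Lemma prodr_if_card (R : comPzSemiRingType) (k : nat) (B : {set 'I_k}) (a b : R) :
  \prod_(q < k) (if q \in B then a else b) = a ^+ #|B| * b ^+ (k - #|B|).
Proof.
rewrite (bigID (mem B)) /= (eq_bigr (fun=> a)) => [|q ->//].
rewrite [X in _ * X](eq_bigr (fun=> b)) => [|q /negbTE ->//].
rewrite !prodr_const; congr (_ * _ ^+ _).
rewrite -[LHS](@eq_card _ (~: B)) => [|q]; last by rewrite inE.
by rewrite cardsCs finset.setCK card_ord.
Qed.

Lemma fsume_cst (R : numDomainType) (T : finType) (P : pred T) (c : R) :
  (\sum_(x \in [set x | P x]) c%:E)%E = (#|P|%:R * c)%:E.
Proof.
rewrite (fsbigE (enum P)) ?enum_uniq //; last 2 first.
- by move=> x; rewrite /= mem_enum.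
- by move=> x /= Px; rewrite mem_enum => /negP[].
rewrite big_enum_cond sumEFin (eq_bigl (mem P)) ?sumr_const ?mulr_natl // => x.
by apply/andP/idP => [[]//|Px]; split => //; apply: mem_set.
Qed.

Section IidRecentRecord.
Variables (R : realType) (d : measure_display) (T : measurableType d).
Variables (P : probability T R) (X : nat -> T -> nat) (p : nat -> R).
Hypothesis iidX : iid_pos_seq P X p.

Let measurable_X m (A : set nat) : (0 < m)%N -> measurable (X m @^-1` A).
Proof. by case: iidX => mX _ _ _; apply: mX. Qed.

Lemma P_ge_Stail m i : (0 < m)%N -> (0 < i)%N ->
  P (X m @^-1` [set x | i <= x]%N) = (Stail p i)%:E.
Proof.
case: iidX => _ _ Xp _ m0 i0.
have -> : X m @^-1` [set x | i <= x]%N =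
    \bigcup_(s in [set s | i <= s]%N) X m @^-1` [set s].
  by apply/seteqP; split => t /=; [exists (X m t) | case=> s /= + ->].
have mX (s : nat) : measurable (X m @^-1` [set s]) by apply: measurable_X.
rewrite /Stail -[LHS]fineK ?fin_num_measure //; last exact: bigcup_measurable.
rewrite measure_bigcup //=; last by move=> s s' _ _ [t [/= <- <-]].
rewrite [in RHS]eseries_cond; congr (fine _)%:E; apply: congr_lim; apply/funext => N.
apply: eq_big => s; first by rewrite mem_setE.
by rewrite mem_setE => si; rewrite Xp // (leq_trans i0 si).
Qed.

Lemma P_lt_Ccum m i : (0 < m)%N -> (0 < i)%N ->
  P (X m @^-1` [set x | x < i]%N) = (Ccum p i.-1)%:E.
Proof.
case: iidX => _ X0 Xp _ m0; case: i => // i _.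
have -> : X m @^-1` [set x | x < i.+1]%N =
    \big[setU/set0]_(l < i.+1) X m @^-1` [set nat_of_ord l].
  rewrite -(bigcup_mkord i.+1 (fun l => X m @^-1` [set l])).
  by apply/seteqP; split => t /=; [exists (X m t) | case=> s /= + ->].
rewrite (@measure_bigsetU _ _ _ P (fun l => X m @^-1` [set l])); first last.
- by move=> l l' _ _ [t [/= <- <-]].
- by move=> l; apply: measurable_X.
rewrite big_ord_recl /= X0 // add0e /Ccum big_add1 big_mkord -sumEFin.
by apply: eq_bigr => l _; rewrite Xp.
Qed.

Section Window.
Variables (k n : nat).
Hypothesis lt_k_n : (k < n)%N.

Lemma P_record_pattern i (B : {set 'I_k}) : (0 < i)%N ->
  P (record_pattern X n i B) =
  (p i * Stail p i ^+ #|B| * Ccum p i.-1 ^+ (k - #|B|))%:E.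
Proof.
case: iidX => _ _ Xp indep i0.
rewrite record_pattern_bigcap // indep ?lag_indices_uniq //; last first.
  by apply/allP => m; apply: lag_indices_gt0.
rewrite big_map /= big_cons subn0 subnn Xp ?(leq_ltn_trans _ lt_k_n) //.
rewrite -[1%N]addn0 iotaDl big_map -[k in iota 0 k]subn0 -/(index_iota 0 k) big_mkord.
rewrite (eq_bigr (fun q : 'I_k => (if q \in B then Stail p i else Ccum p i.-1)%:E)).
  by rewrite prodEFin prodr_if_card -EFinM mulrA.
move=> q _; have q_gt0 : (0 < n - q.+1)%N by rewrite subn_gt0 (leq_ltn_trans (ltn_ord q)).
rewrite subKn ?(leq_trans (ltn_ord q) (ltnW lt_k_n)) // lag_event_ord.
by case: ifP => _; [apply: P_ge_Stail | apply: P_lt_Ccum].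
Qed.

Lemma measurable_record_pattern i (B : {set 'I_k}) :
  measurable (record_pattern X n i B).
Proof.
rewrite record_pattern_bigcap //; apply: bigcap_measurableType => m /= m_in.
by apply: measurable_X; apply: lag_indices_gt0 m_in.
Qed.

Lemma P_value_recent_record j i : (0 < i)%N ->
  P (X n @^-1` [set i] `&` recent_record X k j n) = (rterm p k j i)%:E.
Proof.
move=> i0; rewrite value_recent_record_bigcup measure_fin_bigcup //; first last.
- by move=> B _; apply: measurable_record_pattern.
- exact: trivIset_record_pattern.
- exact: finite_finset.
rewrite (eq_fsbigr (fun=> (p i * Stail p i ^+ j * Ccum p i.-1 ^+ (k - j))%:E)).
  by rewrite fsume_cst -cardsE card_draws card_ord /rterm; congr EFin; ring.
by move=> B /[!inE] /eqP <-; apply: P_record_pattern.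
Qed.

Lemma P_recent_record j :
  P (recent_record X k j n) = (\sum_(1 <= i <oo) (rterm p k j i)%:E)%E.
Proof.
case: iidX => _ X0 _ _; have n_gt0 : (0 < n)%N by apply: leq_ltn_trans lt_k_n.
pose F i := X n @^-1` [set i] `&` recent_record X k j n.
have mF i : measurable (F i).
  rewrite /F value_recent_record_bigcup; apply: fin_bigcup_measurable.
  - exact: finite_finset.
  - by move=> B _; apply: measurable_record_pattern.
have -> : recent_record X k j n = \bigcup_(i in setT) F i.
  by apply/seteqP; split => t; [exists (X n t) | case=> i _ []].
rewrite measure_bigcup //; last by move=> i i' _ _ [t [[/= <- _] [/= <- _]]].
rewrite (eq_eseriesl (P := fun i => i \in setT) (Q := xpredT)); last first.
  by move=> i; rewrite in_setT.
rewrite (@nneseries_split _ _ 0 1) // add0n big_nat1.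
rewrite [e in (e + _)%E](_ : _ = 0%E) ?add0e; last first.
  apply: (subset_measure0 (B := X n @^-1` [set 0%N])) => //; last exact: X0.
  - exact: measurable_X.
  - by move=> t [].
apply: congr_lim; apply/funext => N; apply: eq_big_nat => i /andP[i0 _].
exact: P_value_recent_record.
Qed.

End Window.
End IidRecentRecord.

Theorem theorem2 (R : realType) (d : measure_display) (T : measurableType d)
    (P : probability T R) (X : nat -> T -> nat) (p : nat -> R) (k j n : nat) :
  iid_pos_seq P X p -> (1 <= k)%N -> (j <= k)%N -> (k + 1 <= n)%N ->
  P (recent_record X k j n) = (\sum_(1 <= i <oo) (rterm p k j i)%:E)%E /\
  (forall i : nat, (0 < i)%N ->
     fine (P (X n @^-1` [set i] `&` recent_record X k j n)) /
       fine (P (recent_record X k j n))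
     = rterm p k j i / fine (\sum_(1 <= l <oo) (rterm p k j l)%:E)%E).
Proof.
move=> iidX _ _; rewrite addn1 => lt_k_n.
have total := P_recent_record iidX lt_k_n j.
split=> // i i_gt0.
by rewrite (P_value_recent_record iidX lt_k_n j i_gt0) total.
Qed.
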